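(* Suppose $K$ is a field, $\tau_{(i)}\neq0$ for all $i\in\Omega$, and that for all $B,D\in\mathcal{I}(\overline{\mathbf{P}})$, $|B|=|D|$ implies $\pi(\Omega,B)=\pi(\Omega,D)$. Then $\mathbf{P}$ is hierarchical.
   Context: $\Omega$ is a finite set and $\mathbf{P}=(\Omega,\preccurlyeq_{\mathbf{P}})$ a poset; $\overline{\mathbf{P}}$ is the dual poset and $\mathcal{I}(\overline{\mathbf{P}})$ its set of ideals (up-closed subsets of $\mathbf{P}$). For $Y\subseteq\Omega$: $\max(Y)$ is the set of maximal elements of $Y$ w.r.t. $\preccurlyeq_{\mathbf{P}}$; $\mathcal{I}(Y)$ is the set of down-closed subsets of $Y$. $\tau,\eta\in K^{\Omega}$. For $D,I\subseteq\Omega$, $\varphi(D,I)=(-1)^{|I\cap D|}\big(\prod_{i\in I-\max(I)}\tau_{(i)}\big)\big(\prod_{i\in\max(I)-D}\eta_{(i)}\big)$ if $I\cap D\subseteq\max(I)$, and $0$ otherwise; for $D\subseteq Y\subseteq\Omega$, $\pi(Y,D)=\sum_{I\in\mathcal{I}(Y)}\varphi(D,I)x^{|I|}\in K[x]$. $\mathrm{len}(y)$ is the largest cardinality of a chain in $\mathbf{P}$ with greatest element $y$; $\mathbf{P}$ is hierarchical if $\mathrm{len}(u)+1\leqslant\mathrm{len}(v)$ implies $u\preccurlyeq_{\mathbf{P}}v$. *)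

From mathcomp Require Import all_boot all_order all_algebra.
Set Implicit Arguments. Unset Strict Implicit. Unset Printing Implicit Defensive.
Import GRing.Theory.
Local Open Scope ring_scope.

Section PosetDefs.
Variable T : finType.
Variable le : rel T.

Definition is_partial_order : Prop :=
  [/\ reflexive le, antisymmetric le & transitive le].

Definition maxs (Y : {set T}) : {set T} :=
  [set y in Y | [forall z in Y, le y z ==> (z == y)]].

Definition down_closed_in (Y I : {set T}) : bool :=
  (I \subset Y) && [forall i in I, forall j in Y, le j i ==> (j \in I)].

(* ideals of the dual poset = up-closed subsets of Omega *)
Definition up_closed (B : {set T}) : bool :=
  [forall x in B, forall y, le x y ==> (y \in B)].

Definition is_chain (C : {set T}) : bool :=
  [forall x in C, forall y in C, le x y || le y x].

Definition len (y : T) : nat :=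
  \max_(C : {set T} | [&& is_chain C, y \in C & [forall c in C, le c y]]) #|C|.

Definition hierarchical : Prop :=
  forall u v : T, (len u + 1 <= len v)%N -> le u v.

Variable K : fieldType.
Variables tau eta : T -> K.

Definition phi (D I : {set T}) : K :=
  if I :&: D \subset maxs I then
    (-1) ^+ #|I :&: D| * (\prod_(i in I :\: maxs I) tau i)
      * (\prod_(i in maxs I :\: D) eta i)
  else 0.

Definition pi_poly (Y D : {set T}) : {poly K} :=
  \sum_(I : {set T} | down_closed_in Y I) (phi D I)%:P * 'X^#|I|.

End PosetDefs.

From mathcomp Require Import all_boot all_order all_algebra.
Import GRing.Theory.
Set Implicit Arguments. Unset Strict Implicit. Unset Printing Implicit Defensive.
Local Open Scope ring_scope.

(* Call Y a lower summand when every element of Y lies below every element of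
   its complement, so that Y is the unique down-closed set of size |Y| and the
   coefficient of x^|Y| in pi(Omega, D) is phi(D, Y) alone.  Comparing it for
   the two up-closed sets D1 = (Omega - Y) + max(Y) and
   D2 = (Omega - Y) + (max(Y) - w) + x, where x is a maximal element of
   Y - max(Y) not below w in max(Y), shows that Y - max(Y) is again a lower
   summand: phi(D1, Y) is a nonzero product of tau's while phi(D2, Y) = 0.
   Now if u is not below v, take the smallest lower summand Y containing u.
   Then u is maximal in Y and v lies in Y, so every c < v lies in the lower
   summand Y - max(Y), which avoids u; hence c < u.  Swapping v for u in a
   chain ending at v gives len v <= len u, so P is hierarchical. *)

Section LowerSummands.

Variables (T : finType) (le : rel T).

Definition lower_summand (Y : {set T}) : bool :=
  [forall y in Y, forall w in ~: Y, le y w].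

Lemma lower_summandP (Y : {set T}) y w :
  lower_summand Y -> y \in Y -> w \notin Y -> le y w.
Proof.
move=> /forall_inP lY yY wY.
by have /forall_inP := lY y yY; apply; rewrite in_setC.
Qed.

Lemma lower_summand_setT : lower_summand [set: T].
Proof. by apply/forall_inP => y _; apply/forall_inP => w; rewrite in_setC in_setT. Qed.

Lemma maxsP (Y : {set T}) y :
  reflect (y \in Y /\ forall z, z \in Y -> le y z -> z = y) (y \in maxs le Y).
Proof.
rewrite inE; apply: (iffP andP) => [[yY /forall_inP ymax] | [yY ymax]].
  by split=> // z zY yz; apply/eqP; exact: implyP (ymax z zY) yz.
by split=> //; apply/forall_inP => z zY; apply/implyP => /(ymax z zY) ->.
Qed.

Lemma maxs_sub (Y : {set T}) : maxs le Y \subset Y.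
Proof. by apply/subsetP => y /maxsP[]. Qed.

Lemma setI_setCU (Y S : {set T}) : S \subset Y -> Y :&: (~: Y :|: S) = S.
Proof. by move=> /setIidPr SY; rewrite setIUr setICr set0U. Qed.

Lemma card_setCU (Y S : {set T}) : S \subset Y -> #|~: Y :|: S| = (#|~: Y| + #|S|)%N.
Proof.
move=> SY; rewrite cardsU setIC -setDE.
by move: SY; rewrite -setD_eq0 => /eqP ->; rewrite cards0 subn0.
Qed.

Lemma card_setCU_eq (Y S1 S2 : {set T}) :
  S1 \subset Y -> S2 \subset Y -> #|S1| = #|S2| -> #|~: Y :|: S1| = #|~: Y :|: S2|.
Proof. by move=> S1Y S2Y cardS; rewrite !card_setCU // cardS. Qed.

Lemma down_closed_card_eq (Y I : {set T}) :
  lower_summand Y -> down_closed_in le [set: T] I -> #|I| = #|Y| -> I = Y.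
Proof.
move=> lY /andP[_ /forall_inP dI] cI.
have [IY | /subsetPn[w wI wY]] := boolP (I \subset Y).
  by apply/eqP; rewrite eqEcard IY cI leqnn.
have YI : Y \subset I.
  apply/subsetP => y yY; have /forall_inP := dI w wI.
  by move/(_ y (in_setT y))/implyP; apply; exact: lower_summandP lY yY wY.
by apply/esym/eqP; rewrite eqEcard YI cI leqnn.
Qed.

Lemma maxs_up (Y : {set T}) : {in maxs le Y & Y, forall a b, le a b -> b \in maxs le Y}.
Proof. by move=> a b aM bY ab; have /maxsP[_ amax] := aM; rewrite (amax b bY ab). Qed.

Lemma up_setU1_maxsD1 (Y : {set T}) x w :
  x \in maxs le (Y :\: maxs le Y) -> ~~ le x w ->
  {in x |: (maxs le Y :\ w) & Y, forall a b, le a b -> b \in x |: (maxs le Y :\ w)}.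
Proof.
move=> /maxsP[_ xmax] nxw a b; rewrite in_setU1 in_setD1.
case/orP=> [/eqP -> | /andP[aw aM]] bY ab.
  have [-> | bx] := eqVneq b x; first exact: setU11.
  have bM : b \in maxs le Y.
    by apply/contraT => bnM; case/eqP: bx; apply: xmax; rewrite // in_setD bnM.
  by rewrite in_setU1 in_setD1 bM andbT; apply/orP; right; apply: contraNneq nxw => <-.
have /maxsP[_ amax] := aM.
by rewrite (amax b bY ab) in_setU1 in_setD1 aw aM orbT.
Qed.

Hypothesis le_po : is_partial_order le.

Lemma lower_summand_down (Y : {set T}) y c :
  lower_summand Y -> y \in Y -> le c y -> c \in Y.
Proof.
case: le_po => _ anti _ lY yY cy; apply/contraT => cY.
have c_eq_y : c = y by apply: anti; rewrite cy (lower_summandP lY yY cY).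
by rewrite c_eq_y yY in cY.
Qed.

Lemma lower_summand_down_closed (Y : {set T}) :
  lower_summand Y -> down_closed_in le [set: T] Y.
Proof.
move=> lY; rewrite /down_closed_in subsetT /=.
apply/forall_inP => i iY; apply/forall_inP => j _; apply/implyP.
exact: lower_summand_down.
Qed.

Lemma up_closed_setCU (Y S : {set T}) :
  lower_summand Y -> {in S & Y, forall a b, le a b -> b \in S} ->
  up_closed le (~: Y :|: S).
Proof.
move=> lY S_up; apply/forall_inP => a aD; apply/forallP => b; apply/implyP => ab.
rewrite in_setU in_setC; have [bY | //] := boolP (b \in Y).
move: aD; rewrite in_setU in_setC => /orP[aY | aS]; last by rewrite (S_up a b).
by move: aY; rewrite (lower_summand_down lY bY ab).
Qed.

(* A maximal element above a is one with the largest down-set. *)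
Lemma maxs_above (A : {set T}) a : a \in A -> exists2 x, x \in maxs le A & le a x.
Proof.
case: le_po => refl anti tr aA.
have [x /andP[xA ax] xmax] :=
  @arg_maxnP _ a (fun x => (x \in A) && le a x) (fun x => #|[set z | le z x]|)
    (introT andP (conj aA (refl a))).
exists x => //; apply/maxsP; split=> // z zA xz.
have sub : [set t | le t x] \subset [set t | le t z].
  by apply/subsetP => t; rewrite !inE => tx; exact: tr tx xz.
have eq_down : [set t | le t x] = [set t | le t z].
  by apply/eqP; rewrite eqEcard sub /=; apply: xmax; rewrite zA (tr _ _ _ ax xz).
have : z \in [set t | le t z] by rewrite inE refl.
by rewrite -eq_down inE => zx; apply: anti; rewrite zx xz.
Qed.

(* Replace v by u in a chain ending at v. *)
Lemma len_le u v :
  ~~ le u v -> (forall c, le c v -> c != v -> le c u) -> (len le v <= len le u)%N.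
Proof.
case: le_po => refl _ _ nuv below.
apply/bigmax_leqP => C /and3P[chC vC /forall_inP C_le_v].
pose C' := u |: (C :\ v).
have uC : u \notin C :\ v by rewrite in_setD1 negb_and (contra (C_le_v u)) ?orbT.
have -> : #|C| = #|C'| by rewrite cardsU1 uC (cardsD1 v C) vC.
have C'_le_u : {in C', forall c, le c u}.
  move=> c; rewrite in_setU1 in_setD1 => /orP[/eqP -> // | /andP[cv cC]].
  by apply: below cv; exact: C_le_v.
have C'_C c : c \in C' -> c != u -> c \in C.
  by rewrite in_setU1 in_setD1 => /orP[/eqP -> | /andP[_ cC]]; rewrite ?eqxx.
apply: leq_bigmax_cond; apply/and3P; split; last 2 first.
- by rewrite setU11.
- by apply/forall_inP.
apply/forall_inP => a aC'; apply/forall_inP => b bC'.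
have [-> | au] := eqVneq a u; first by rewrite C'_le_u ?orbT.
have [-> | bu] := eqVneq b u; first by rewrite C'_le_u.
have /forall_inP/(_ a (C'_C a aC' au))/forall_inP := chC.
by apply; exact: C'_C.
Qed.

Variables (K : fieldType) (tau eta : T -> K).

Lemma coef_pi_lower_summand (D Y : {set T}) :
  lower_summand Y -> (pi_poly le tau eta [set: T] D)`_#|Y| = phi le tau eta D Y.
Proof.
move=> lY; rewrite /pi_poly coef_sum (bigD1 Y) ?lower_summand_down_closed //=.
rewrite coefCM coefXn eqxx mulr1 big1 ?addr0 // => I /andP[dI IY].
rewrite coefCM coefXn; case: eqP => [cI | _]; last by rewrite mulr0.
by case/eqP: IY; exact: down_closed_card_eq.
Qed.

Lemma phi_eq0 (D I : {set T}) : ~~ (I :&: D \subset maxs le I) -> phi le tau eta D I = 0.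
Proof. by move=> nsub; rewrite /phi (negbTE nsub). Qed.

Hypothesis tau_neq0 : forall i, tau i != 0.

Lemma phi_neq0 (D I : {set T}) : I :&: D = maxs le I -> phi le tau eta D I != 0.
Proof.
move=> ID; rewrite /phi ID subxx.
have -> : maxs le I :\: D = set0.
  by apply/eqP; rewrite setD_eq0 -ID subsetIr.
rewrite big_set0 mulr1 mulf_neq0 ?expf_neq0 ?oppr_eq0 ?oner_eq0 //.
by apply/prodf_neq0 => i _.
Qed.

Hypothesis pi_eq : forall B D : {set T}, up_closed le B -> up_closed le D ->
  #|B| = #|D| -> pi_poly le tau eta [set: T] B = pi_poly le tau eta [set: T] D.

Lemma lower_summand_setD_maxs (Y : {set T}) :
  lower_summand Y -> lower_summand (Y :\: maxs le Y).
Proof.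
case: (le_po) => _ _ tr lY; apply/forall_inP => y; rewrite in_setD => /andP[ynM yY].
apply/forall_inP => w; rewrite in_setC in_setD negb_and negbK.
case/orP=> [wM | wY]; last exact: lower_summandP lY yY wY.
apply/contraT => nyw.
have [x xM yx] : exists2 x, x \in maxs le (Y :\: maxs le Y) & le y x.
  by apply: maxs_above; rewrite in_setD ynM.
have /maxsP[] := xM; rewrite in_setD => /andP[xnM xY] _.
have nxw : ~~ le x w by apply: contra nyw => /(tr _ _ _ yx).
pose S := x |: (maxs le Y :\ w).
have SY : S \subset Y by rewrite subUset sub1set xY (subset_trans (subsetDl _ _)) ?maxs_sub.
have cardS : #|maxs le Y| = #|S|.
  by rewrite cardsU1 in_setD1 (negbTE xnM) andbF (cardsD1 w (maxs le Y)) wM.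
have := pi_eq (up_closed_setCU lY (@maxs_up Y))
  (up_closed_setCU lY (up_setU1_maxsD1 xM nxw)) (card_setCU_eq (maxs_sub Y) SY cardS).
move=> /(congr1 (fun p : {poly K} => p`_#|Y|)); rewrite !coef_pi_lower_summand // => phi_eq.
have phiS0 : phi le tau eta (~: Y :|: S) Y = 0.
  by apply: phi_eq0; rewrite setI_setCU //; apply/subsetPn; exists x => //; exact: setU11.
by have := phi_neq0 (setI_setCU (maxs_sub Y)); rewrite phi_eq phiS0 eqxx.
Qed.

Lemma below_le_of_nle u v c : ~~ le u v -> le c v -> c != v -> le c u.
Proof.
move=> nuv cv cnv.
have [Y /andP[lY uY] Ymin] := @arg_minnP _ [set: T]
  (fun Y => lower_summand Y && (u \in Y)) (fun Y => #|Y|)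
  (introT andP (conj lower_summand_setT (in_setT u))).
have lY' := lower_summand_setD_maxs lY.
have uM : u \in maxs le Y.
  apply/contraT => unM.
  have /Ymin /= : lower_summand (Y :\: maxs le Y) && (u \in Y :\: maxs le Y).
    by rewrite lY' in_setD unM.
  move=> cardY; have YD : Y :\: maxs le Y = Y by apply/eqP; rewrite eqEcard subsetDl.
  have [m mM _] := maxs_above uY.
  by move: (subsetP (maxs_sub Y) m mM); rewrite -YD in_setD mM.
have vY : v \in Y by apply/contraT => vnY; rewrite (lower_summandP lY uY vnY) in nuv.
apply: (lower_summandP lY'); last by rewrite in_setD uM.
rewrite in_setD (lower_summand_down lY vY cv) andbT.
by apply: contra cnv => /maxsP[_ /(_ v vY cv) ->].
Qed.

End LowerSummands.

Theorem proposition3p3 (T : finType) (le : rel T) (K : fieldType)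
    (tau eta : T -> K) :
  is_partial_order le ->
  (forall i : T, tau i != 0) ->
  (forall B D : {set T}, up_closed le B -> up_closed le D ->
     #|B| = #|D| ->
     pi_poly le tau eta [set: T] B = pi_poly le tau eta [set: T] D) ->
  hierarchical le.
Proof.
move=> le_po tau_neq0 pi_eq u v; rewrite addn1 => len_lt; apply/contraT => nuv.
have := len_le le_po nuv (fun c => below_le_of_nle le_po tau_neq0 pi_eq nuv).
by rewrite leqNgt len_lt.
Qed.
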